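(* Let $L\in\mathbb{N}$ and let the scalar sequences $\{\overline{\sigma}^{(l)}_*(k)\}_{k\ge 0}$ ($*\in\{f,i,o\}$), $\{\overline{\phi}^{(l)}_c(k)\}_{k\ge 0}$ and $\{\eta^{(l)}(k)\}_{k\ge -1}$ be defined as in the context. Then for every layer $l\in[L]$ each of these sequences is monotonically non-increasing in $k$ and convergent.
   Context: Fix $L\in\mathbb{N}$, dimensions $n_x,n_c$, and $x_{\max}>0$. For each layer $l\in[L]$ let $n^{(l)}=n_x$ if $l=1$ and $n^{(l)}=n_c$ if $l\ge 2$, and let $x^{(l)}_{\max}=x_{\max}$ if $l=1$ and $x^{(l)}_{\max}=1$ if $l\ge 2$. Let $W^{(l)}_*\in\mathbb{R}^{n_c\times n^{(l)}}$, $U^{(l)}_*\in\mathbb{R}^{n_c\times n_c}$, $b^{(l)}_*\in\mathbb{R}^{n_c}$ for $*\in\{f,i,c,o\}$. Let $\sigma(w)=1/(1+e^{-w})$ and $\phi(w)=\tanh w$. For a matrix $A$, $|A|$ is the entrywise absolute value; $\mathbf{1}_n$ is the all-ones vector in $\mathbb{R}^n$; for a vector $v$, $v_+$ is the componentwise positive part $(\max\{v_{(j)},0\})_j$; $\|v\|_\infty=\max_j|v_{(j)}|$. Define, for $\eta\ge 0$ and $*\in\{f,i,o\}$, $G^{(l)}_*(\eta)=\big\|\big(x^{(l)}_{\max}|W^{(l)}_*|\mathbf{1}_{n^{(l)}}+\eta|U^{(l)}_*|\mathbf{1}_{n_c}+b^{(l)}_*\big)_+\big\|_\infty$, and $G^{(l)}_c(\eta)=\big\|x^{(l)}_{\max}|W^{(l)}_c|\mathbf{1}_{n^{(l)}}+\eta|U^{(l)}_c|\mathbf{1}_{n_c}+|b^{(l)}_c|\big\|_\infty$.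 Define recursively, with $\eta^{(l)}(-1)=1$ and for $k\ge 0$: $\overline{\sigma}^{(l)}_*(k)=\sigma(G^{(l)}_*(\eta^{(l)}(k-1)))$ for $*\in\{f,i,o\}$; $\overline{\phi}^{(l)}_c(k)=\phi(G^{(l)}_c(\eta^{(l)}(k-1)))$; $\overline{c}^{(l)}(k)=\dfrac{\overline{\sigma}^{(l)}_i(k)\,\overline{\phi}^{(l)}_c(k)}{1-\overline{\sigma}^{(l)}_f(k)}$; $\eta^{(l)}(k)=\phi(\overline{c}^{(l)}(k))\,\overline{\sigma}^{(l)}_o(k)$. *)

From HB Require Import structures.
From mathcomp Require Import all_boot all_order all_algebra.
From mathcomp Require Import all_classical all_reals all_analysis.
Set Implicit Arguments. Unset Strict Implicit. Unset Printing Implicit Defensive.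
Import Order.TTheory GRing.Theory Num.Theory.
Local Open Scope ring_scope.

Inductive gate := gf | gi | gc | go.

Section LSTM.
Variable R : realType.

Definition sigmoid (w : R) : R := 1 / (1 + expR (- w)).
Definition tanhR (w : R) : R := (expR w - expR (- w)) / (expR w + expR (- w)).

Definition absmx m n (A : 'M[R]_(m, n)) : 'M[R]_(m, n) := map_mx (fun x => `|x|) A.
Definition ones n : 'cV[R]_n := const_mx 1.
Definition pospart m (v : 'cV[R]_m) : 'cV[R]_m := map_mx (fun x => Num.max x 0) v.
(* infinity norm (0 for the empty vector) *)
Definition norminf m (v : 'cV[R]_m) : R := \big[Num.max/0]_(j < m) `|v j 0|.

Variables (nc n : nat) (xm : R)
  (W : gate -> 'M[R]_(nc, n)) (U : gate -> 'M[R]_(nc, nc)) (b : gate -> 'cV[R]_nc).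

Definition Gvec (g : gate) (eta : R) : 'cV[R]_nc :=
  xm *: (absmx (W g) *m ones n) + eta *: (absmx (U g) *m ones nc).

Definition Ggate (g : gate) (eta : R) : R := norminf (pospart (Gvec g eta + b g)).
Definition Gcell (eta : R) : R := norminf (Gvec gc eta + absmx (b gc)).

(* etaS k = eta(k-1), i.e. etaS 0 = eta(-1) = 1, etaS (k+1) = eta(k). *)
Definition sigbar_of (g : gate) (e : R) : R := sigmoid (Ggate g e).
Definition phibar_of (e : R) : R := tanhR (Gcell e).
Definition cbar_of (e : R) : R :=
  sigbar_of gi e * phibar_of e / (1 - sigbar_of gf e).

Fixpoint etaS (k : nat) : R :=
  match k with
  | 0%N => 1
  | k'.+1 => tanhR (cbar_of (etaS k')) * sigbar_of go (etaS k')
  end.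

Definition sigbar (g : gate) (k : nat) : R := sigbar_of g (etaS k).
Definition phibar (k : nat) : R := phibar_of (etaS k).
Definition cbar (k : nat) : R := cbar_of (etaS k).
Definition eta (k : nat) : R := etaS k.+1.
End LSTM.

(* layer l : 'I_L (0-based: val l = 0 is the paper's layer 1) *)
Definition layer_dim (nx nc : nat) L (l : 'I_L) : nat := if val l == 0%N then nx else nc.
Definition layer_xmax (R : realType) (xmax : R) L (l : 'I_L) : R :=
  if val l == 0%N then xmax else 1.

From HB Require Import structures.
From mathcomp Require Import all_boot all_order all_algebra.
From mathcomp Require Import all_classical all_reals all_analysis.
From mathcomp Require Import ring lra.
Import Order.TTheory GRing.Theory Num.Theory numFieldNormedType.Exports.
Set Implicit Arguments. Unset Strict Implicit. Unset Printing Implicit Defensive.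
Local Open Scope ring_scope.

(* The weights enter G_* and G_c only through absolute values, so both are
   nondecreasing in eta (G_c on eta >= 0); sigma, tanh and
   1 / (1 - sigma w) = 1 + e^w are nondecreasing as well.  Hence eta(k) = F(eta(k-1))
   for a map F that is nondecreasing on [0, oo) with values in [0, 1], and
   eta(0) = F(1) <= 1 = eta(-1) starts a descending induction.  Every other
   sequence is a nondecreasing function of eta(k-1) bounded below by 0, so it is
   nonincreasing and bounded below, hence convergent. *)

Section MonotoneSequences.
Variables (d : Order.disp_t) (T : porderType d).

Lemma nonincreasing_recursion (P : T -> Prop) (f : T -> T) (u : T ^nat) :
  (forall k, u k.+1 = f (u k)) -> (forall k, P (u k)) ->
  (forall x y, P x -> P y -> (x <= y)%O -> (f x <= f y)%O) ->
  (u 1 <= u 0)%O -> nonincreasing_seq u.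
Proof.
move=> uS uP f_homo u10; apply/nonincreasing_seqP; elim=> [//|k IH].
by have := f_homo _ _ (uP _) (uP _) IH; rewrite -!uS.
Qed.

Lemma nonincreasing_comp (P : T -> Prop) (f : T -> T) (u : T ^nat) :
  (forall k, P (u k)) ->
  (forall x y, P x -> P y -> (x <= y)%O -> (f x <= f y)%O) ->
  nonincreasing_seq u -> nonincreasing_seq (f \o u).
Proof. by move=> uP f_homo u_noninc m n mn; apply: f_homo => //; apply: u_noninc. Qed.

End MonotoneSequences.

Lemma nonincreasing_ge_cvgn (R : realType) (u : R ^nat) (m : R) :
  nonincreasing_seq u -> (forall k, m <= u k) -> cvgn u.
Proof.
by move=> u_noninc um; apply: nonincreasing_is_cvgn => //; exists m => _ [k _ <-].
Qed.

Section Activations.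
Variable R : realType.
Implicit Types x y : R.

Lemma sigmoid_gt0 x : 0 < sigmoid x.
Proof. by rewrite /sigmoid divr_gt0 // addr_gt0 // expR_gt0. Qed.

Lemma sigmoid_le1 x : sigmoid x <= 1.
Proof.
by rewrite /sigmoid ler_pdivrMr ?mul1r ?lerDl ?addr_gt0 // ?expR_ge0 ?expR_gt0.
Qed.

Lemma sigmoid_homo : {homo @sigmoid R : x y / x <= y}.
Proof.
move=> x y xy; rewrite /sigmoid !div1r lef_pV2 ?posrE ?addr_gt0 ?expR_gt0 //.
by rewrite lerD2l ler_expR lerN2.
Qed.

Lemma inv_1Bsigmoid x : (1 - sigmoid x)^-1 = 1 + expR x.
Proof.
have ex_gt0 := expR_gt0 x.
rewrite /sigmoid expRN; field.
by rewrite [_ + 1]addrC addrK oner_eq0 !gt_eqF ?addr_gt0.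
Qed.

Lemma tanhR_sigmoid x : tanhR x = 2 * sigmoid (x + x) - 1.
Proof.
have ex_gt0 := expR_gt0 x.
rewrite /tanhR /sigmoid opprD expRD !expRN; field.
by rewrite !gt_eqF ?addr_gt0 ?invr_gt0 ?mulr_gt0.
Qed.

Lemma tanhR_homo : {homo @tanhR R : x y / x <= y}.
Proof.
move=> x y xy; rewrite !tanhR_sigmoid lerD2r ler_pM2l //.
by apply: sigmoid_homo; rewrite lerD.
Qed.

Lemma tanhR_le1 x : tanhR x <= 1.
Proof. by rewrite tanhR_sigmoid; have := sigmoid_le1 (x + x); lra. Qed.

Lemma tanhR_ge0 x : 0 <= x -> 0 <= tanhR x.
Proof.
move=> x_ge0; apply: le_trans (tanhR_homo x_ge0).
by rewrite /tanhR oppr0 subrr mul0r.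
Qed.

End Activations.

Section InfinityNorm.
Variable R : realType.

Lemma norminf_ge0 m (v : 'cV[R]_m) : 0 <= norminf v.
Proof. by rewrite /norminf; elim/big_ind: _ => // x y x_ge0 _; rewrite le_max x_ge0. Qed.

Lemma norminf_le m (v w : 'cV[R]_m) :
  (forall j, `|v j 0| <= `|w j 0|) -> norminf v <= norminf w.
Proof. by move=> vw; apply: le_bigmax2 => j _. Qed.

Lemma norminf_pospart_le m (v w : 'cV[R]_m) :
  (forall j, v j 0 <= w j 0) -> norminf (pospart v) <= norminf (pospart w).
Proof.
move=> vw; apply: norminf_le => j.
have max_ge0 (x : R) : 0 <= Num.max x 0 by rewrite le_max lexx orbT.
by rewrite /pospart !mxE !ger0_norm ?max_ge0 //; apply: le_max2.
Qed.

End InfinityNorm.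

Section Layer.
Variables (R : realType) (nc n : nat) (xm : R).
Variables (W : gate -> 'M[R]_(nc, n)) (U : gate -> 'M[R]_(nc, nc)).
Variable b : gate -> 'cV[R]_nc.
Hypothesis xm_ge0 : 0 <= xm.

Local Notation Gvec := (Gvec xm W U).
Local Notation Ggate := (Ggate xm W U b).
Local Notation Gcell := (Gcell xm W U b).
Local Notation sigbar_of := (sigbar_of xm W U b).
Local Notation phibar_of := (phibar_of xm W U b).
Local Notation cbar_of := (cbar_of xm W U b).
Local Notation etaS := (etaS xm W U b).

Lemma GvecE g e j :
  Gvec g e j 0 = xm * (\sum_k `|W g j k|) + e * (\sum_k `|U g j k|).
Proof.
by rewrite !mxE !big_distrr; congr (_ + _); apply: eq_bigr => k _; rewrite !mxE mulr1.
Qed.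

Lemma Gvec_ge0 g e j : 0 <= e -> 0 <= Gvec g e j 0.
Proof. by move=> e_ge0; rewrite GvecE addr_ge0 ?mulr_ge0 ?sumr_ge0. Qed.

Lemma Gvec_le g e e' j : e <= e' -> Gvec g e j 0 <= Gvec g e' j 0.
Proof. by move=> ee'; rewrite !GvecE lerD2l ler_wpM2r ?sumr_ge0. Qed.

Lemma Ggate_homo g : {homo Ggate g : e e' / e <= e'}.
Proof.
move=> e e' ee'; apply: norminf_pospart_le => j.
by rewrite mxE [in X in _ <= X]mxE lerD2r Gvec_le.
Qed.

Lemma Gcell_le e e' : 0 <= e -> e <= e' -> Gcell e <= Gcell e'.
Proof.
move=> e_ge0 ee'; have e'_ge0 := le_trans e_ge0 ee'.
apply: norminf_le => j; rewrite mxE [in X in _ <= X]mxE.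
rewrite /absmx [map_mx _ _ _ _]mxE.
by rewrite !(@ger0_norm _ (Gvec gc _ j 0 + _)) ?addr_ge0 ?Gvec_ge0 // lerD2r Gvec_le.
Qed.

Lemma sigbar_of_homo g : {homo sigbar_of g : e e' / e <= e'}.
Proof. by move=> e e' ee'; apply/sigmoid_homo/Ggate_homo. Qed.

Lemma sigbar_of_ge0 g e : 0 <= sigbar_of g e.
Proof. exact/ltW/sigmoid_gt0. Qed.

Lemma phibar_of_ge0 e : 0 <= phibar_of e.
Proof. exact/tanhR_ge0/norminf_ge0. Qed.

Lemma phibar_of_le e e' : 0 <= e -> e <= e' -> phibar_of e <= phibar_of e'.
Proof. by move=> e_ge0 ee'; apply/tanhR_homo/Gcell_le. Qed.

Lemma cbar_ofE e :
  cbar_of e = sigbar_of gi e * phibar_of e * (1 + expR (Ggate gf e)).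
Proof. by rewrite /cbar_of /sigbar_of/= inv_1Bsigmoid. Qed.

Lemma cbar_of_ge0 e : 0 <= cbar_of e.
Proof.
rewrite cbar_ofE mulr_ge0 ?addr_ge0 ?expR_ge0 //.
exact: mulr_ge0 (sigbar_of_ge0 _ _) (phibar_of_ge0 _).
Qed.

Lemma cbar_of_le e e' : 0 <= e -> e <= e' -> cbar_of e <= cbar_of e'.
Proof.
move=> e_ge0 ee'; rewrite !cbar_ofE; apply: ler_pM.
- exact: mulr_ge0 (sigbar_of_ge0 _ _) (phibar_of_ge0 _).
- by rewrite addr_ge0 ?expR_ge0.
- exact: ler_pM (sigbar_of_ge0 _ _) (phibar_of_ge0 _)
    (sigbar_of_homo gi ee') (phibar_of_le e_ge0 ee').
- by rewrite lerD2l ler_expR Ggate_homo.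
Qed.

Definition eta_step e := tanhR (cbar_of e) * sigbar_of go e.

Lemma eta_step_ge0 e : 0 <= eta_step e.
Proof. exact: mulr_ge0 (tanhR_ge0 (cbar_of_ge0 _)) (sigbar_of_ge0 _ _). Qed.

Lemma eta_step_le1 e : eta_step e <= 1.
Proof.
rewrite -[1]mulr1; exact: ler_pM (tanhR_ge0 (cbar_of_ge0 _)) (sigbar_of_ge0 _ _)
  (tanhR_le1 _) (sigmoid_le1 _).
Qed.

Lemma eta_step_le e e' : 0 <= e -> e <= e' -> eta_step e <= eta_step e'.
Proof.
move=> e_ge0 ee'; apply: ler_pM (tanhR_ge0 (cbar_of_ge0 _)) (sigbar_of_ge0 _ _) _ _.
- exact/tanhR_homo/cbar_of_le.
- exact: sigbar_of_homo.
Qed.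

Lemma etaS_ge0 k : 0 <= etaS k.
Proof. by case: k => [|k] //; apply: eta_step_ge0. Qed.

Lemma etaS_nonincreasing : nonincreasing_seq etaS.
Proof.
apply: (@nonincreasing_recursion _ _ (fun e => 0 <= e) eta_step) => //.
- exact: etaS_ge0.
- by move=> e e' e_ge0 _; apply: eta_step_le.
- exact: eta_step_le1.
Qed.

Lemma etaS_nonincreasing_cvgn : nonincreasing_seq etaS /\ cvgn etaS.
Proof.
split; first exact: etaS_nonincreasing.
exact: (nonincreasing_ge_cvgn etaS_nonincreasing etaS_ge0).
Qed.

Lemma sigbar_nonincreasing_cvgn g :
  nonincreasing_seq (sigbar xm W U b g) /\ cvgn (sigbar xm W U b g).
Proof.
have noninc : nonincreasing_seq (sigbar_of g \o etaS).
  apply: (nonincreasing_comp (P := fun _ => True)) etaS_nonincreasing => // e e' _ _.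
  exact: sigbar_of_homo.
by split; last exact: nonincreasing_ge_cvgn noninc (fun k => sigbar_of_ge0 g (etaS k)).
Qed.

Lemma phibar_nonincreasing_cvgn :
  nonincreasing_seq (phibar xm W U b) /\ cvgn (phibar xm W U b).
Proof.
have noninc : nonincreasing_seq (phibar_of \o etaS).
  apply: (nonincreasing_comp (P := fun e => 0 <= e)) etaS_nonincreasing.
    exact: etaS_ge0.
  by move=> e e' e_ge0 _; apply: phibar_of_le.
by split; last exact: nonincreasing_ge_cvgn noninc (fun k => phibar_of_ge0 (etaS k)).
Qed.

End Layer.

Theorem lemmaB1 (R : realType) (L nx nc : nat) (xmax : R) (hxmax : 0 < xmax)
  (W : forall l : 'I_L, gate -> 'M[R]_(nc, layer_dim nx nc l))
  (U : 'I_L -> gate -> 'M[R]_(nc, nc))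
  (b : 'I_L -> gate -> 'cV[R]_nc) :
  forall l : 'I_L,
    let xm := layer_xmax xmax l in
    (forall g : gate, g <> gc ->
       nonincreasing_seq (sigbar xm (W l) (U l) (b l) g) /\
       cvgn (sigbar xm (W l) (U l) (b l) g)) /\
    (nonincreasing_seq (phibar xm (W l) (U l) (b l)) /\
       cvgn (phibar xm (W l) (U l) (b l))) /\
    (nonincreasing_seq (etaS xm (W l) (U l) (b l)) /\
       cvgn (etaS xm (W l) (U l) (b l))).
Proof.
move=> l xm.
have xm_ge0 : 0 <= xm by rewrite /xm /layer_xmax; case: ifP => // _; exact: ltW.
split; first by move=> g _; apply: sigbar_nonincreasing_cvgn.
by split; [apply: phibar_nonincreasing_cvgn | apply: etaS_nonincreasing_cvgn].
Qed.
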